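(* Let $k\geq1$ and $S=sgp^+\langle a,b\mid a^kb=b\rangle$. Then $S$ is prefix-automatic but not biautomatic.
   Context: $sgp^+\langle A\mid R\rangle$ is the free semigroup $A^+$ (nonempty words) modulo the congruence generated by $R$; $A^*$ is the free monoid with empty word $\varepsilon$. Automaticity: regular = accepted by a finite automaton. With $\$\notin A$, $A(2,\$)=(A\cup\{\$\})^2\setminus\{(\$,\$)\}$; $(\alpha,\beta)\delta_A^R$ (resp. $\delta_A^L$) is the word over $A(2,\$)$ obtained by padding the shorter word on the right (resp. left) with $\$$'s and reading letter pairs. For a semigroup $S$ generated by a finite set $A$, $\phi:A^+\to S$ canonical, $L\subseteq A^+$ regular with $\phi(L)=S$, write $\alpha=\beta$ if $\phi(\alpha)=\phi(\beta)$, and for $a\in A\cup\{\varepsilon\}$: $L_a^\$=\{(\alpha,\beta)\delta^R_A:\alpha a=\beta\}$, ${}^\$L_a=\{(\alpha,\beta)\delta^L_A:\alpha a=\beta\}$, ${}_aL^\$=\{(\alpha,\beta)\delta^R_A:a\alpha=\beta\}$, ${}^\$_aL=\{(\alpha,\beta)\delta^L_A:a\alpha=\beta\}$ (with $\alpha,\beta\in L$). $S$ is automatic if some such $(A,L)$ (for some finite generating set $A$) has all $L_a^\$$ regular; biautomatic if some $(A,L)$ has all four families regular; prefix-automatic if some automatic structure $(A,L)$ also has $\{(\alpha,\beta)\delta_A^R:\alpha\in L,\beta\in\mathrm{Pref}(L),\alpha=\beta\}$ regular ($\mathrm{Pref}(L)$ = prefixes of words of $L$). *)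

From Stdlib Require Import Relation_Operators.
From mathcomp Require Import all_boot.
Set Implicit Arguments. Unset Strict Implicit. Unset Printing Implicit Defensive.

Record dfa (Sigma : finType) := DFA {
  dfa_state : finType;
  dfa_start : dfa_state;
  dfa_final : pred dfa_state;
  dfa_trans : dfa_state -> Sigma -> dfa_state }.

Definition dfa_accept (Sigma : finType) (M : dfa Sigma) (w : seq Sigma) : bool :=
  @dfa_final _ M (foldl (@dfa_trans _ M) (@dfa_start _ M) w).

Definition regular (Sigma : finType) (L : seq Sigma -> Prop) : Prop :=
  exists M : dfa Sigma, forall w, L w <-> dfa_accept M w.

(* A(2,$) = (A u {$})^2 \ {($,$)}, with $ represented by None. *)
Notation A2 A := ({p : option A * option A | p != (None, None)}).

Definition padR (A : Type) (n : nat) (s : seq A) : seq (option A) :=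
  map Some s ++ nseq (n - size s) None.
Definition padL (A : Type) (n : nat) (s : seq A) : seq (option A) :=
  nseq (n - size s) None ++ map Some s.

Definition deltaR (A : finType) (al be : seq A) : seq (A2 A) :=
  let n := maxn (size al) (size be) in
  pmap (fun p => insub p : option (A2 A)) (zip (padR n al) (padR n be)).
Definition deltaL (A : finType) (al be : seq A) : seq (A2 A) :=
  let n := maxn (size al) (size be) in
  pmap (fun p => insub p : option (A2 A)) (zip (padL n al) (padL n be)).

(* A semigroup S = X^+ / E, where X is a finite alphabet and E a congruence on
   X-words; elements of S are represented by nonempty X-words, and two
   representatives denote the same element iff they are E-related.
   A finite generating set of S is given by an index finType A and an
   injective (in S) map gen : A -> S. *)
Section Presented.
Variables (X : finType) (E : seq X -> seq X -> Prop).

Definition phi (A : finType) (gen : A -> seq X) (w : seq A) : seq X :=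
  flatten (map gen w).

Definition gen_set (A : finType) (gen : A -> seq X) : Prop :=
  [/\ forall i, gen i != [::],
      forall i j, E (gen i) (gen j) -> i = j
    & forall x, x != [::] -> exists w : seq A, w != [::] /\ E x (phi gen w)].

Definition rep_lang (A : finType) (gen : A -> seq X) (L : seq A -> Prop) :=
  [/\ regular L,
      forall w, L w -> w != [::]
    & forall x, x != [::] -> exists w, L w /\ E x (phi gen w)].

Definition ext (A : Type) (oa : option A) : seq A :=
  if oa is Some a then [:: a] else [::].

Definition LaR (A : finType) (gen : A -> seq X) (L : seq A -> Prop)
  (oa : option A) : seq (A2 A) -> Prop :=
  fun w => exists al be, [/\ L al, L be,
    E (phi gen (al ++ ext oa)) (phi gen be) & w = deltaR al be].
Definition LaL (A : finType) (gen : A -> seq X) (L : seq A -> Prop)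
  (oa : option A) : seq (A2 A) -> Prop :=
  fun w => exists al be, [/\ L al, L be,
    E (phi gen (al ++ ext oa)) (phi gen be) & w = deltaL al be].
Definition aLR (A : finType) (gen : A -> seq X) (L : seq A -> Prop)
  (oa : option A) : seq (A2 A) -> Prop :=
  fun w => exists al be, [/\ L al, L be,
    E (phi gen (ext oa ++ al)) (phi gen be) & w = deltaR al be].
Definition aLL (A : finType) (gen : A -> seq X) (L : seq A -> Prop)
  (oa : option A) : seq (A2 A) -> Prop :=
  fun w => exists al be, [/\ L al, L be,
    E (phi gen (ext oa ++ al)) (phi gen be) & w = deltaL al be].

Definition automatic_structure (A : finType) (gen : A -> seq X)
  (L : seq A -> Prop) : Prop :=
  [/\ gen_set gen, rep_lang gen L & forall oa, regular (LaR gen L oa)].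

Definition automatic : Prop :=
  exists (A : finType) (gen : A -> seq X) (L : seq A -> Prop),
    automatic_structure gen L.

Definition biautomatic : Prop :=
  exists (A : finType) (gen : A -> seq X) (L : seq A -> Prop),
    [/\ gen_set gen, rep_lang gen L &
      forall oa, [/\ regular (LaR gen L oa), regular (LaL gen L oa),
                     regular (aLR gen L oa) & regular (aLL gen L oa)]].

Definition Pref (A : Type) (L : seq A -> Prop) : seq A -> Prop :=
  fun be => exists ga, L (be ++ ga).

Definition prefix_automatic : Prop :=
  exists (A : finType) (gen : A -> seq X) (L : seq A -> Prop),
    automatic_structure gen L /\
    regular (fun w : seq (A2 A) => exists al be,
      [/\ L al, Pref L be, E (phi gen al) (phi gen be) & w = deltaR al be]).

End Presented.

Definition la : bool := true.
Definition lb : bool := false.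

Definition sk_step (k : nat) (x y : seq bool) : Prop :=
  exists u v, x = u ++ (nseq k la ++ [:: lb]) ++ v /\ y = u ++ [:: lb] ++ v.

Definition sk_cong (k : nat) : seq bool -> seq bool -> Prop :=
  clos_refl_sym_trans (seq bool) (sk_step k).

From Stdlib Require Import Relation_Operators.
From mathcomp Require Import all_boot zify.
Set Implicit Arguments. Unset Strict Implicit. Unset Printing Implicit Defensive.

(* Words over {a, b} without a factor a^k b are normal forms for a^k b = b.
   Taking the nonempty ones as the language over the generators a, b, the
   pair (alpha, nf (alpha x)) is a common prefix followed by a tail that is
   empty, ($,a), ($,b) or (a,b)(a,$)^n with k | n + 1; an automaton checks
   this while counting trailing a's up to k.  Prefixes of normal forms are
   normal forms, which gives prefix-automaticity.
   Against biautomaticity, fix any structure, a generator c whose image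
   contains b, and the left-padded language for right multiplication by c.
   A shortest representative of x = b^m a^n (m, n large) is compared with a
   representative of y = b^m c = x c: left padding puts a long initial
   segment of it opposite padding symbols, and pumping that segment, while
   tracking lengths modulo k, deletes a block a^(k t) and yields a shorter
   representative of x. *)

(** * Regular languages *)

Section RegularLanguages.
Variable Sigma : finType.
Implicit Types (L : seq Sigma -> Prop) (w : seq Sigma).

Lemma regular_ext L L' : (forall w, L w <-> L' w) -> regular L -> regular L'.
Proof. by move=> eqL [M HM]; exists M => w; rewrite -eqL. Qed.

Lemma regular_state (Q : finType) (f : seq Sigma -> Q) (step : Q -> Sigma -> Q)
    (P : pred Q) L :
  (forall w x, f (rcons w x) = step (f w) x) -> (forall w, L w <-> P (f w)) ->
  regular L.
Proof.
move=> f_rcons HL; exists (DFA (f [::]) P step) => w.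
rewrite HL /dfa_accept /=; suff -> : foldl step (f [::]) w = f w by [].
by elim/last_ind: w => //= w x IH; rewrite foldl_rcons IH f_rcons.
Qed.

Lemma regular_or L1 L2 : regular L1 -> regular L2 -> regular (fun w => L1 w \/ L2 w).
Proof.
move=> [M1 HM1] [M2 HM2].
pose run (M : dfa Sigma) w := foldl (dfa_trans (d:=M)) (dfa_start M) w.
apply: (@regular_state _ (fun w => (run M1 w, run M2 w))
  (fun q x => (dfa_trans q.1 x, dfa_trans q.2 x))
  [pred q | dfa_final q.1 || dfa_final q.2]) => [w x|w].
  by rewrite /run !foldl_rcons.
by rewrite HM1 HM2; apply: (rwP orP).
Qed.

Lemma regular_nil : regular (fun w => w = [::]).
Proof.
apply: (@regular_state _ (fun w => w == [::]) (fun _ _ => false) id) => [w x|w].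
  by case: w.
by split => [->|/eqP].
Qed.

Lemma regular_letter y : regular (fun w => w = [:: y]).
Proof.
apply: (@regular_state _ (fun w => (w == [::], w == [:: y]))
  (fun q x => (false, q.1 && (x == y))) snd) => [w x|w] /=.
  by rewrite -[[:: y]]/(rcons [::] y) eqseq_rcons; case: w.
by split => [->|/eqP].
Qed.

Lemma dfa_accept_cut (C : finType) (M : dfa Sigma) (col : nat -> C) w n :
  #|dfa_state M| * #|C| <= n ->
  exists i j, [/\ i < j <= n, col i = col j &
    dfa_accept M (take i w ++ drop j w) = dfa_accept M w].
Proof.
move=> small_n.
pose f (i : 'I_n.+1) := (foldl (dfa_trans (d:=M)) (dfa_start M) (take i w), col i).
have /injectivePn [i [j neq_ij eq_f]] : ~~ injectiveb f.
  by apply/injectiveP => /leq_card; rewrite card_prod !card_ord leqNgt ltnS small_n.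
have accept_cut (i' j' : 'I_n.+1) : f i' = f j' -> i' < j' ->
    exists i j, [/\ i < j <= n, col i = col j &
      dfa_accept M (take i w ++ drop j w) = dfa_accept M w].
  move=> [eq_state eq_col] lt_ij; exists i', j'; split => //.
    by rewrite lt_ij -ltnS ltn_ord.
  by rewrite /dfa_accept foldl_cat eq_state -foldl_cat cat_take_drop.
case: (ltngtP i j) => [|lt_ji|/val_inj eq_ij]; first exact: accept_cut.
  exact: accept_cut (esym eq_f) lt_ji.
by rewrite eq_ij eqxx in neq_ij.
Qed.

End RegularLanguages.

Section ConcatAfterMap.
Variables (S T : finType) (h : S -> T).
Hypothesis h_inj : injective h.

Lemma regular_map_cat (L1 : seq S -> Prop) (L2 : seq T -> Prop) :
  regular L1 -> regular L2 -> (forall x y t, L2 (y :: t) -> h x != y) ->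
  regular (fun w => exists u t, [/\ L1 u, L2 t & w = map h u ++ t]).
Proof.
move=> [M1 HM1] [M2 HM2] L2_head.
(* Run [M1] on preimages under [h]; the first letter outside the image of [h]
   switches deterministically to [M2]. *)
pose trans (q : option (dfa_state M1 + dfa_state M2)) (y : T) :=
  match q with
  | Some (inl q1) =>
      if [pick x | h x == y] is Some x then Some (inl (dfa_trans (d:=M1) q1 x))
      else if dfa_final q1 then Some (inr (dfa_trans (dfa_start M2) y))
      else None
  | Some (inr q2) => Some (inr (dfa_trans (d:=M2) q2 y))
  | None => None
  end.
pose final (q : option (dfa_state M1 + dfa_state M2)) := match q with
  | Some (inl q1) => dfa_final (d:=M1) q1 && dfa_final (dfa_start M2)
  | Some (inr q2) => dfa_final (d:=M2) q2
  | None => false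
  end.
exists (DFA (Some (inl (dfa_start M1))) final trans).
have run_dead w : foldl trans None w = None by elim: w.
have run_right q2 w :
    foldl trans (Some (inr q2)) w = Some (inr (foldl (dfa_trans (d:=M2)) q2 w)).
  by elim: w q2 => //= y w IH q2; rewrite IH.
suff run_left q1 w : final (foldl trans (Some (inl q1)) w) <->
    exists u t, [/\ dfa_final (foldl (dfa_trans (d:=M1)) q1 u), L2 t & w = map h u ++ t].
  move=> w; rewrite /dfa_accept /= run_left.
  by split=> -[u [t [Hu Ht ->]]]; exists u, t; split => //; apply/HM1.
elim: w q1 => [|y w IH] q1 /=.
  split=> [/andP [fin1 fin2]|[[|x u] [[|y t] [/= fin1 L2nil //]]]].
    by exists [::], [::]; split => //; apply/HM2.
  by rewrite fin1; move/HM2: L2nil.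
case: pickP => [x /eqP hx|no_pre].
  rewrite IH; split=> [[u [t [Hu Ht ->]]]|[[|x' u] [t [Hu Ht /= Hw]]]].
  - by exists (x :: u), t; rewrite /= hx.
  - by move: Ht; rewrite -Hw => /(L2_head x); rewrite hx eqxx.
  - case: Hw => hx' ->; exists u, t; split => //.
    by rewrite (h_inj (etrans (esym hx') (esym hx))) in Hu.
case: ifP => fin1.
  rewrite run_right; split=> [acc|[[|x u] [t [_ Ht /= Hw]]]].
  - by exists [::], (y :: w); split => //; apply/HM2.
  - by move: Ht; rewrite -Hw => /HM2.
  - by case: Hw => /esym/eqP hx; rewrite no_pre in hx.
rewrite run_dead; split => // -[[|x u] [t [Hu _ /= Hw]]].
- by rewrite /= fin1 in Hu.
- by case: Hw => /esym/eqP hx; rewrite no_pre in hx.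
Qed.

End ConcatAfterMap.

(** * Padded pairs *)

Lemma drop_catl (T : Type) n (s1 s2 : seq T) :
  n <= size s1 -> drop n (s1 ++ s2) = drop n s1 ++ s2.
Proof.
by rewrite drop_cat leq_eqVlt => /predU1P [->|->]; rewrite ?ltnn ?subnn ?drop0 ?drop_size.
Qed.

Section Padding.
Variable A : finType.
Implicit Types (a b : seq A).

(* [s] stands for a letter and [d] for the padding symbol [$]. *)
Definition pair_ss (x y : A) : A2 A := exist _ (Some x, Some y) isT.
Definition pair_ds (y : A) : A2 A := exist _ (None, Some y) isT.
Definition pair_sd (x : A) : A2 A := exist _ (Some x, None) isT.
Definition diag (x : A) : A2 A := pair_ss x x.

Lemma diag_inj : injective diag.
Proof. by move=> x y []. Qed.

Lemma val_pmap_insub (s : seq (option A * option A)) :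
  all (fun p => p != (None, None)) s ->
  map val (pmap (fun p => insub p : option (A2 A)) s) = s.
Proof.
elim: s => //= p s IH /andP [p_ok s_ok].
by case: insubP => [u _ /= ->|]; rewrite ?p_ok // IH.
Qed.

Lemma all_zip_Some_l a (t : seq (option A)) :
  all (fun p => p != (None, None)) (zip (map Some a) t).
Proof. by elim: a t => [|x a IH] [|y t] //=. Qed.

Lemma all_zip_Some_r a (t : seq (option A)) :
  all (fun p => p != (None, None)) (zip t (map Some a)).
Proof. by elim: a t => [|x a IH] [|[y|] t] //=. Qed.

Lemma deltaR_val a b : map val (deltaR a b) =
  zip (padR (maxn (size a) (size b)) a) (padR (maxn (size a) (size b)) b).
Proof.
rewrite /deltaR /padR; apply: val_pmap_insub.
case: (leqP (size b) (size a)) => [le_ba|/ltnW le_ab].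
  by rewrite subnn cats0; exact: all_zip_Some_l.
by rewrite subnn cats0; exact: all_zip_Some_r.
Qed.

Lemma deltaL_val a b : map val (deltaL a b) =
  zip (padL (maxn (size a) (size b)) a) (padL (maxn (size a) (size b)) b).
Proof.
rewrite /deltaL /padL; apply: val_pmap_insub.
case: (leqP (size b) (size a)) => [le_ba|/ltnW le_ab].
  by rewrite subnn; exact: all_zip_Some_l.
by rewrite subnn; exact: all_zip_Some_r.
Qed.

Lemma deltaR_cons x y a b : deltaR (x :: a) (y :: b) = pair_ss x y :: deltaR a b.
Proof. by apply: (inj_map val_inj); rewrite /= !deltaR_val /= maxnSS /padR /= !subSS. Qed.

Lemma deltaR_nil_l b : deltaR [::] b = map pair_ds b.
Proof.
apply: (inj_map val_inj); rewrite deltaR_val max0n /padR /= subnn cats0 subn0.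
by elim: b => //= y b ->.
Qed.

Lemma deltaR_nil_r a : deltaR a [::] = map pair_sd a.
Proof.
apply: (inj_map val_inj); rewrite deltaR_val maxn0 /padR /= subnn cats0 subn0.
by elim: a => //= x a ->.
Qed.

Lemma deltaR_catl p a b : deltaR (p ++ a) (p ++ b) = map diag p ++ deltaR a b.
Proof. by elim: p => //= x p IH; rewrite deltaR_cons IH. Qed.

Lemma deltaR_diag a : deltaR a a = map diag a.
Proof. by rewrite -[a in LHS]cats0 deltaR_catl deltaR_nil_l cats0. Qed.

Lemma deltaL_cons x a b : size b <= size a ->
  deltaL (x :: a) b = pair_sd x :: deltaL a b.
Proof.
move=> le_ba; apply: (inj_map val_inj).
by rewrite /= !deltaL_val /= !(maxn_idPl _) ?(leqW le_ba) // /padL /= !subnn subSn.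
Qed.

Lemma deltaL_catl p a b : size b <= size a ->
  deltaL (p ++ a) b = map pair_sd p ++ deltaL a b.
Proof.
move=> le_ba; elim: p => //= x p IH.
by rewrite deltaL_cons ?IH // size_cat (leq_trans le_ba) ?leq_addl.
Qed.

Lemma deltaL_cut i j a b : i <= j <= size a - size b ->
  take i (deltaL a b) ++ drop j (deltaL a b) = deltaL (take i a ++ drop j a) b.
Proof.
move=> /andP [le_ij le_j]; pose d := size a - size b; rewrite -/d in le_j.
have [d0|d_gt0] := posnP d.
  move: le_j le_ij; rewrite d0 leqn0 => /eqP ->; rewrite leqn0 => /eqP ->.
  by rewrite !take0 !drop0.
have le_b : size b <= size (drop d a) by rewrite size_drop /d; lia.
have size_d : size (take d a) = d by rewrite size_takel // leq_subr.
have le_i : i <= d := leq_trans le_ij le_j.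
rewrite -(cat_take_drop d a) deltaL_catl // !takel_cat ?drop_catl ?size_map ?size_d //.
by rewrite catA -map_take -map_drop -map_cat -deltaL_catl // catA.
Qed.

Lemma pmap_padL n a : pmap id (padL n a) = a.
Proof. by rewrite /padL pmap_cat; elim: (n - size a) => //=; elim: a => //= x a ->. Qed.

Lemma size_padL n a : size a <= n -> size (padL n a) = n.
Proof. by rewrite /padL size_cat size_nseq size_map => /subnK. Qed.

Lemma deltaL_inj a1 b1 a2 b2 : deltaL a1 b1 = deltaL a2 b2 -> a1 = a2 /\ b1 = b2.
Proof.
have unzip_deltaL a b (n := maxn (size a) (size b)) :
    unzip1 (map val (deltaL a b)) = padL n a /\ unzip2 (map val (deltaL a b)) = padL n b.
  by rewrite deltaL_val unzip1_zip ?unzip2_zip // !size_padL ?leq_maxl ?leq_maxr.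
move=> eq12; have [eqa1 eqb1] := unzip_deltaL a1 b1.
have [eqa2 eqb2] := unzip_deltaL a2 b2.
split.
  by rewrite -[a1](pmap_padL (maxn (size a1) (size b1))) -eqa1 eq12 eqa2 pmap_padL.
by rewrite -[b1](pmap_padL (maxn (size a1) (size b1))) -eqb1 eq12 eqb2 pmap_padL.
Qed.

End Padding.

Arguments diag {A}.

(** * The congruence and its normal forms *)

Lemma nseq_cons_comm (T : Type) (x : T) n (s : seq T) :
  nseq n x ++ x :: s = x :: nseq n x ++ s.
Proof. by elim: n => //= n ->. Qed.

Fixpoint trail (r : nat) (w : seq bool) : nat :=
  if w is x :: w' then trail (if x then r.+1 else 0) w' else r.

Lemma trail_cat r u v : trail r (u ++ v) = trail (trail r u) v.
Proof. by elim: u r => //= x u IH r; rewrite IH. Qed.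

Lemma trail_nseq r j : trail r (nseq j la) = r + j.
Proof. by elim: j r => [|j IH] r /=; rewrite ?addn0 ?IH ?addnS. Qed.

Lemma trail_le r w : trail r w <= r + size w.
Proof.
elim: w r => [|x w IH] r /=; first by rewrite addn0.
by apply: leq_trans (IH _) _; case: x; lia.
Qed.

Lemma trail_cat_le r u v : lb \in v -> trail r (u ++ v) <= size v.
Proof.
rewrite trail_cat; elim: v (trail r u) => // -[] v IH s; rewrite in_cons /=.
  by move=> /IH /leq_trans; apply.
by move=> _; apply: leq_trans (trail_le 0 v) _.
Qed.

Section Congruence.
Variable k : nat.
Local Notation E := (sk_cong k).

Lemma sk_cong_catl p u v : E u v -> E (p ++ u) (p ++ v).
Proof.
elim=> {u v} [_ _ [u [v [-> ->]]]| x | x y _ IH | x y z _ IH1 _ IH2].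
- by apply: rst_step; exists (p ++ u), v; rewrite !catA.
- exact: rst_refl.
- exact: rst_sym.
- exact: rst_trans IH2.
Qed.

Lemma sk_cong_catr q u v : E u v -> E (u ++ q) (v ++ q).
Proof.
elim=> {u v} [_ _ [u [v [-> ->]]]| x | x y _ IH | x y z _ IH1 _ IH2].
- by apply: rst_step; exists u, (v ++ q); rewrite -!catA.
- exact: rst_refl.
- exact: rst_sym.
- exact: rst_trans IH2.
Qed.

Lemma sk_cong_invariant (T : Type) (f : seq bool -> T) :
  (forall u v, f (u ++ nseq k la ++ lb :: v) = f (u ++ lb :: v)) ->
  forall x y, E x y -> f x = f y.
Proof.
move=> f_step x y; elim=> {x y} [_ _ [u [v [-> ->]]]|_|_ _ _ ->|_ _ _ _ -> _ ->] //.
by rewrite -catA f_step.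
Qed.

Lemma sk_cong_drop_ak v : lb \in v -> E (nseq k la ++ v) v.
Proof.
elim: v => // -[] v IH; rewrite in_cons /=.
  by move=> /IH; rewrite nseq_cons_comm; apply: (sk_cong_catl [:: la]).
by move=> _; apply: rst_step; exists [::], v; rewrite -catA.
Qed.

Lemma sk_cong_drop u v t : lb \in v -> E (u ++ nseq (k * t) la ++ v) (u ++ v).
Proof.
move=> b_in_v; apply: sk_cong_catl.
elim: t => [|t IH]; first by rewrite muln0; apply: rst_refl.
rewrite mulnS nseqD -catA; apply: rst_trans IH; apply: sk_cong_drop_ak.
by rewrite mem_cat b_in_v orbT.
Qed.

Lemma sk_cong_count_b x y : E x y -> count_mem lb x = count_mem lb y.
Proof.
by apply: sk_cong_invariant => u v; rewrite !count_cat /= count_nseq mul0n.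
Qed.

Lemma sk_cong_trail x y : E x y -> trail 0 x = trail 0 y.
Proof. by apply: sk_cong_invariant => u v; rewrite !trail_cat. Qed.

End Congruence.

Section NormalForms.
Variable k : nat.
Hypothesis k_gt0 : 0 < k.
Local Notation E := (sk_cong k).

(* [trail r w], [irr_from r w] and [nf_from r w] concern the word a^r w:
   its number of trailing a's, its irreducibility (no factor a^k b), and its
   normal form. *)
Fixpoint irr_from (r : nat) (w : seq bool) : bool :=
  if w is x :: w' then (if x then irr_from r.+1 w' else (r < k) && irr_from 0 w')
  else true.
Fixpoint nf_from (r : nat) (w : seq bool) : seq bool :=
  if w is x :: w' then
    (if x then nf_from r.+1 w' else nseq (r %% k) la ++ lb :: nf_from 0 w')
  else nseq r la.
Definition irr := irr_from 0.
Definition nf := nf_from 0.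

Lemma irr_from_cat r u v :
  irr_from r (u ++ v) = irr_from r u && irr_from (trail r u) v.
Proof. by elim: u r => //= -[] u IH r; rewrite IH // andbA. Qed.

Lemma irr_from_nseq r j v : irr_from r (nseq j la ++ v) = irr_from (r + j) v.
Proof. by elim: j r => [|j IH] r /=; rewrite ?addn0 // IH addnS. Qed.

Lemma nf_from_nseq r j v : nf_from r (nseq j la ++ v) = nf_from (r + j) v.
Proof. by elim: j r => [|j IH] r /=; rewrite ?addn0 // IH addnS. Qed.

Lemma irr_catl u v : irr (u ++ v) -> irr u.
Proof. by rewrite /irr irr_from_cat => /andP []. Qed.

Lemma irr_cat_nseq u j : irr u -> irr (u ++ nseq j la).
Proof. by rewrite /irr irr_from_cat -[nseq j la]cats0 irr_from_nseq => ->. Qed.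

Lemma irr_rcons_b u : irr (rcons u lb) = irr u && (trail 0 u < k).
Proof. by rewrite -cats1 /irr irr_from_cat /= andbT. Qed.

Lemma sk_cong_nf x y : E x y -> nf x = nf y.
Proof.
apply: sk_cong_invariant => u v; rewrite /nf; elim: u 0 => [|z u IH] r /=.
  by rewrite nf_from_nseq /= modnDr.
by case: z; rewrite IH.
Qed.

Lemma nf_from_irr r w : irr_from r w -> nf_from r w = nseq r la ++ w.
Proof.
elim: w r => [|x w IH] r /=; first by rewrite cats0.
case: x => [/IH ->|/andP [lt_rk /IH ->]]; first by rewrite nseq_cons_comm.
by rewrite modn_small.
Qed.

Lemma nf_irr w : irr w -> nf w = w.
Proof. exact: nf_from_irr. Qed.

Lemma sk_cong_nf_from r w : E (nseq r la ++ w) (nf_from r w).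
Proof.
elim: w r => [|x w IH] r /=; first by rewrite cats0; apply: rst_refl.
case: x; first by rewrite nseq_cons_comm; exact: (IH r.+1).
rewrite {1}(divn_eq r k) nseqD -catA mulnC.
apply: rst_trans (@sk_cong_drop k [::] _ (r %/ k) _) _.
  by rewrite mem_cat inE eqxx orbT.
by apply: (sk_cong_catl (nseq (r %% k) la)); exact: (sk_cong_catl [:: lb] (IH 0)).
Qed.

Lemma sk_cong_nf_r w : E w (nf w).
Proof. exact: (sk_cong_nf_from 0). Qed.

Lemma irr_nf_from r w : irr (nf_from r w).
Proof.
elim: w r => [|x w IH] r /=; first by rewrite /irr -[nseq r la]cats0 irr_from_nseq.
case: x => //; rewrite /irr irr_from_nseq /= ltn_pmod //; exact: IH.
Qed.

Lemma irr_nf w : irr (nf w).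
Proof. exact: irr_nf_from. Qed.

Lemma nf_eq_nil w : (nf w == [::]) = (w == [::]).
Proof.
suff nf_from_nil r : nf_from r w = [::] -> w = [::] /\ r = 0.
  by apply/eqP/eqP => [/nf_from_nil []|->].
elim: w r => [|[] w IH] r /=; [by case: r | by case/IH | by case: (r %% k)].
Qed.

Lemma irr_sk_cong_eq x y : irr x -> irr y -> E x y -> x = y.
Proof. by move=> irr_x irr_y /sk_cong_nf; rewrite !nf_irr. Qed.

Lemma irr_split_b w : irr w ->
  exists v t, w = v ++ nseq (k * t) la /\ irr (rcons v lb).
Proof.
have [u [def_w trail_u]] : exists u, w = u ++ nseq (trail 0 w) la /\ trail 0 u = 0.
  elim/last_ind: w => [|s [] [u [def_s trail_u]]]; first by exists [::].
    exists u; rewrite -cats1 trail_cat /= {1}def_s -catA.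
    by rewrite nseq_cons_comm cats0.
  by exists (rcons s lb); rewrite -cats1 trail_cat /= cats0.
set j := trail 0 w in def_w *; move=> irr_w.
exists (u ++ nseq (j %% k) la), (j %/ k); split.
  by rewrite -catA -nseqD mulnC addnC -divn_eq.
rewrite irr_rcons_b trail_cat trail_u trail_nseq ltn_pmod // andbT.
by apply: irr_cat_nseq; move: irr_w; rewrite def_w => /irr_catl.
Qed.

End NormalForms.

(** * Prefix-automaticity *)

Definition gen_letter (x : bool) : seq bool := [:: x].

Lemma phi_letter w : phi gen_letter w = w.
Proof. by elim: w => //= x w; rewrite /phi /= => ->. Qed.

Lemma gen_set_letter k : gen_set (sk_cong k) gen_letter.
Proof.
split=> // [x y /sk_cong_count_b|w w_ne0]; first by case: x; case: y.
by exists w; rewrite phi_letter; split=> //; apply: rst_refl.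
Qed.

Section PrefixAutomatic.
Variable k : nat.
Hypothesis k_gt0 : 0 < k.
Local Notation E := (sk_cong k).
Local Notation irr := (irr k).
Local Notation nf := (nf k).

Definition nf_lang (w : seq bool) : Prop := (w != [::]) && irr w.

Definition irr_state (w : seq bool) : bool * option 'I_k.+1 :=
  (w != [::], if irr w then Some (inord (minn (trail 0 w) k)) else None).

Lemma regular_irr_state L (P : pred (bool * option 'I_k.+1)) :
  (forall w, L w <-> P (irr_state w)) -> regular L.
Proof.
apply: (@regular_state _ _ irr_state (fun q x => (true, if q.2 is Some r then
  (if x then Some (inord (minn r.+1 k)) else if r < k then Some (inord 0) else None)
  else None))) => w x.
rewrite /irr_state -cats1; have -> : w ++ [:: x] != [::] by case: w.
rewrite /irr irr_from_cat trail_cat; case: (irr_from k 0 w) => //=.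
rewrite inordK ?ltnS ?geq_minr //.
case: x => /=.
  by have -> : minn (minn (trail 0 w) k).+1 k = minn (trail 0 w).+1 k by lia.
by rewrite andbT min0n; have -> : (minn (trail 0 w) k < k) = (trail 0 w < k) by lia.
Qed.

Lemma regular_nf_lang : regular nf_lang.
Proof.
apply: (@regular_irr_state _ (fun q => q.1 && (q.2 != None))) => w.
by rewrite /nf_lang /irr_state /=; case: (irr w).
Qed.

Lemma irr_rcons_b_state v :
  irr (rcons v lb) = if (irr_state v).2 is Some r then r < k else false.
Proof.
rewrite irr_rcons_b /irr_state; case: (irr v) => //=.
by rewrite inordK ?ltnS ?geq_minr //; lia.
Qed.

Lemma regular_irr_rcons_b : regular (fun v => irr (rcons v lb)).
Proof.
apply: (@regular_irr_state _ (fun q => if q.2 is Some r then r < k else false)) => v.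
by rewrite irr_rcons_b_state.
Qed.

Lemma regular_nonempty_irr_rcons_b :
  regular (fun v => (v != [::]) && irr (rcons v lb)).
Proof.
apply: (@regular_irr_state _
  (fun q => q.1 && if q.2 is Some r then r < k else false)) => v.
by rewrite irr_rcons_b_state.
Qed.

Definition tail_b (t : seq (A2 bool)) : Prop :=
  exists n, t = pair_ss la lb :: nseq n (pair_sd la) /\ k %| n.+1.

Lemma regular_tail_b : regular tail_b.
Proof.
pose mod_k n : 'I_k := Ordinal (ltn_pmod n k_gt0).
pose f (t : seq (A2 bool)) := if t is y :: s then
    (if (y == pair_ss la lb) && all (fun z => z == pair_sd la) s
     then Some (Some (mod_k (size t))) else None)
  else Some None.
apply: (@regular_state _ _ f (fun q x => match q with
  | Some None => if x == pair_ss la lb then Some (Some (mod_k 1)) else None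
  | Some (Some c) => if x == pair_sd la then Some (Some (mod_k c.+1)) else None
  | None => None end)
  (fun q => if q is Some (Some c) then c == 0 :> nat else false)).
- move=> [|y s] x; rewrite /f /= ?andbT ?all_rcons ?size_rcons //.
  case: (y == pair_ss la lb) (all _ s) (x == pair_sd la) => [] [] [] //=.
  by congr (Some (Some _)); apply: val_inj; rewrite /= -[in RHS]addn1 modnDml addn1.
- move=> t; split=> [[n [-> dvd_k]]|].
    by rewrite /f /= all_nseq eqxx orbT /= size_nseq.
  case: t => [|y s]; rewrite /f //.
  case: ifP => // /andP [/eqP -> /all_pred1P ->] /eqP mod0.
  by exists (size s); split; rewrite // /dvdn; move: mod0; rewrite /= size_nseq => ->.
Qed.

Lemma LaR_letterE md w : LaR E gen_letter nf_lang md w <->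
  exists a, nf_lang a /\ w = deltaR a (nf (a ++ ext md)).
Proof.
split=> [[a [b [La /andP [_ irr_b] Eab ->]]]|[a [La ->]]].
  by exists a; split=> //; rewrite !phi_letter in Eab; rewrite (sk_cong_nf Eab) nf_irr.
exists a, (nf (a ++ ext md)); split=> //; last by rewrite !phi_letter; apply: sk_cong_nf_r.
by rewrite /nf_lang nf_eq_nil (irr_nf k_gt0) andbT; case/andP: La; case: a.
Qed.

Lemma LaR_letter_none w : LaR E gen_letter nf_lang None w <->
  exists u t, [/\ nf_lang u, t = [::] & w = map diag u ++ t].
Proof.
rewrite LaR_letterE; split=> [[a [La ->]]|[a [t [La -> ->]]]];
  exists a; have /andP [_ irr_a] := La; rewrite /= !cats0 (nf_irr irr_a) deltaR_diag //.
by exists [::]; rewrite cats0.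
Qed.

Lemma LaR_letter_a w : LaR E gen_letter nf_lang (Some la) w <->
  exists u t, [/\ nf_lang u, t = [:: pair_ds la] & w = map diag u ++ t].
Proof.
have nf_a u :
    nf_lang u -> deltaR u (nf (u ++ [:: la])) = map diag u ++ [:: pair_ds la].
  case/andP=> _ irr_u; rewrite nf_irr; last exact: (irr_cat_nseq 1 irr_u).
  by rewrite -[u in deltaR u]cats0 deltaR_catl deltaR_nil_l.
rewrite LaR_letterE; split=> [[a [La ->]]|[u [t [Lu -> ->]]]].
  by exists a, [:: pair_ds la]; rewrite nf_a.
by exists u; rewrite nf_a.
Qed.

Lemma LaR_letter_b w : LaR E gen_letter nf_lang (Some lb) w <->
  (exists u t, [/\ (u != [::]) && irr (rcons u lb), t = [:: pair_ds lb]
                 & w = map diag u ++ t])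
  \/ (exists u t, [/\ irr (rcons u lb), tail_b t & w = map diag u ++ t]).
Proof.
have delta_b v n : deltaR (v ++ nseq n.+1 la) (v ++ [:: lb]) =
    map diag v ++ pair_ss la lb :: nseq n (pair_sd la).
  by rewrite deltaR_catl deltaR_cons deltaR_nil_r map_nseq.
rewrite LaR_letterE.
split=> [[a [/andP [a_ne0 /(irr_split_b k_gt0) [v [t [def_a irr_vb]]]] ->]]|].
  have -> : nf (a ++ [:: lb]) = v ++ [:: lb].
    rewrite [RHS]cats1 -(nf_irr irr_vb) -cats1 def_a -catA.
    by apply/sk_cong_nf/sk_cong_drop.
  case: t def_a => [|t] def_a.
    left; exists v, [:: pair_ds lb]; rewrite irr_vb andbT.
    move: a_ne0; rewrite def_a muln0 cats0 => ->.
    by rewrite -[v in deltaR v]cats0 deltaR_catl deltaR_nil_l.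
  right; exists v, (pair_ss la lb :: nseq (k * t.+1).-1 (pair_sd la)); split=> //.
    by exists (k * t.+1).-1; rewrite prednK ?muln_gt0 ?k_gt0 // dvdn_mulr.
  by rewrite def_a -delta_b prednK // muln_gt0 k_gt0.
case=> [[v [t [/andP [v_ne0 irr_vb] -> ->]]]|[v [t [irr_vb [n [-> dvd_k]] ->]]]];
  move: irr_vb; rewrite -cats1 => irr_vb; have irr_v := irr_catl irr_vb.
  exists v; rewrite /= (nf_irr irr_vb) /nf_lang v_ne0 irr_v; split=> //.
  by rewrite -[v in deltaR v]cats0 deltaR_catl deltaR_nil_l.
exists (v ++ nseq n.+1 la); split.
  by rewrite /nf_lang irr_cat_nseq // andbT; case: v {irr_vb irr_v}.
have -> : nf ((v ++ nseq n.+1 la) ++ [:: lb]) = v ++ [:: lb].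
  rewrite -[RHS](nf_irr irr_vb) -catA -(divnK dvd_k) mulnC.
  by apply/sk_cong_nf/sk_cong_drop.
by rewrite delta_b.
Qed.

Lemma regular_LaR_letter md : regular (LaR E gen_letter nf_lang md).
Proof.
case: md => [[]|].
- apply: regular_ext (fun w => iff_sym (LaR_letter_a w)) _.
  apply: (regular_map_cat (@diag_inj _) regular_nf_lang (regular_letter (pair_ds la))).
  by move=> x y t [-> _].
- apply: regular_ext (fun w => iff_sym (LaR_letter_b w)) _.
  apply: regular_or.
    apply: (regular_map_cat (@diag_inj _) regular_nonempty_irr_rcons_b
      (regular_letter (pair_ds lb))).
    by move=> x y t [-> _].
  apply: (regular_map_cat (@diag_inj _) regular_irr_rcons_b regular_tail_b).
  by move=> [] y t [n [[-> _] _]].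
- apply: regular_ext (fun w => iff_sym (LaR_letter_none w)) _.
  by apply: (regular_map_cat (@diag_inj _) regular_nf_lang (regular_nil _)).
Qed.

Lemma prefix_automatic_sk_cong : prefix_automatic E.
Proof.
exists _, gen_letter, nf_lang; split.
  split; [exact: gen_set_letter | split | exact: regular_LaR_letter].
  - exact: regular_nf_lang.
  - by move=> w /andP [].
  - move=> x x_ne0; exists (nf x); rewrite phi_letter; split; last exact: sk_cong_nf_r.
    by rewrite /nf_lang nf_eq_nil x_ne0 (irr_nf k_gt0).
apply: regular_ext (regular_LaR_letter None) => w.
split=> [[a [b [La Lb Eab ->]]]|[a [b [La [c /andP [_ /irr_catl irr_b]] Eab ->]]]].
  by exists a, b; split=> //; [exists [::]; rewrite cats0 | rewrite /= cats0 in Eab].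
rewrite !phi_letter in Eab; have /andP [_ irr_a] := La.
have a_eq_b := irr_sk_cong_eq irr_a irr_b Eab; subst b; rewrite /LaR.
by exists a, a; split=> //; rewrite /= cats0; apply: rst_refl.
Qed.

End PrefixAutomatic.

(** * Failure of biautomaticity *)

Lemma split_last (T : Type) (P : pred T) (s : seq T) : has P s ->
  exists s1 z s2, [/\ s = s1 ++ z :: s2, P z & ~~ has P s2].
Proof.
elim: s => //= x s IH; have [/IH [s1 [z [s2 [-> Pz no_P]]]] _|no_P Px] := boolP (has P s).
  by exists (x :: s1), z, s2.
by exists [::], x, s; rewrite orbF in Px.
Qed.

Lemma count_b0_nseq (s : seq bool) : count_mem lb s = 0 -> s = nseq (size s) la.
Proof. by move/count_memPn; elim: s => //= -[] s IH; rewrite inE //= => /IH {1}->. Qed.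

Section Representatives.
Variables (k : nat) (A : finType) (gen : A -> seq bool).
Local Notation phi := (phi gen).

Lemma phi_cat s t : phi (s ++ t) = phi s ++ phi t.
Proof. by rewrite /phi map_cat flatten_cat. Qed.

Definition max_gen := \max_(x : A) size (gen x).

Lemma size_phi s : size (phi s) <= max_gen * size s.
Proof.
elim: s => //= x s IH; rewrite size_cat mulnS leq_add //; exact: (leq_bigmax x).
Qed.

Lemma last_b_position a : lb \in phi a -> exists p, [/\ p < size a,
  forall j, j <= p -> lb \in phi (drop j a),
  count_mem lb (phi a) <= max_gen * p.+1 &
  trail 0 (phi a) <= max_gen * (size a - p)].
Proof.
move=> /flatten_mapP [z0 z0_in b_in_z0].
have /split_last [a1 [z [a2 [-> b_in_z /hasPn no_b]]]] : has (fun z => lb \in gen z) a.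
  by apply/hasP; exists z0.
have no_b_a2 : count_mem lb (phi a2) = 0.
  by apply/count_memPn/flatten_mapP => -[z' /no_b /negP].
have b_in_za2 : lb \in phi (z :: a2) by rewrite /= mem_cat b_in_z.
exists (size a1); split.
- by rewrite size_cat addnS ltnS leq_addr.
- by move=> j le_j; rewrite drop_catl // phi_cat mem_cat b_in_za2 orbT.
- rewrite -cat_rcons phi_cat count_cat no_b_a2 addn0 -(size_rcons a1 z).
  exact: leq_trans (count_size _ _) (size_phi _).
- rewrite phi_cat size_cat addKn; apply: leq_trans (trail_cat_le _ _ b_in_za2) _.
  exact: (size_phi (z :: a2)).
Qed.

Lemma sk_cong_cut a i j : i <= j ->
  count_mem lb (phi (take i a ++ drop j a)) = count_mem lb (phi a) ->
  size (phi (take i a)) = size (phi (take j a)) %[mod k] ->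
  lb \in phi (drop j a) ->
  sk_cong k (phi a) (phi (take i a ++ drop j a)).
Proof.
move=> le_ij eq_count eq_mod b_in_drop; set seg := drop i (take j a).
have def_tj : take j a = take i a ++ seg.
  by rewrite -{1}(cat_take_drop i (take j a)) take_takel.
have def_a : a = take i a ++ seg ++ drop j a by rewrite catA -def_tj cat_take_drop.
have /count_b0_nseq seg_a : count_mem lb (phi seg) = 0.
  move: eq_count (congr1 (fun s => count_mem lb (phi s)) def_a).
  by rewrite /= !phi_cat !count_cat; lia.
have seg_mod : k %| size (phi seg).
  move: eq_mod; rewrite def_tj phi_cat size_cat -{1}[size _]addn0 => /eqP.
  by rewrite eqn_modDl mod0n eq_sym.
rewrite {1}def_a !phi_cat seg_a -(divnK seg_mod) mulnC; exact: sk_cong_drop.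
Qed.

End Representatives.

Section LeftPaddedLanguage.
Variables (k : nat) (A : finType) (gen : A -> seq bool) (L : seq A -> Prop) (c : A).
Hypotheses (k_gt0 : 0 < k) (L_rep : rep_lang (sk_cong k) gen L) (b_in_c : lb \in gen c).
Local Notation E := (sk_cong k).
Local Notation phi := (phi gen).
Local Notation Cb := (max_gen gen).

Section Pumping.
Variable M : dfa (A2 A).
Hypothesis M_LaL : forall w, LaL E gen L (Some c) w <-> dfa_accept M w.

(* In a representative of [x], [m] b's push the last generator containing b
   beyond position [#|dfa_state M| * k], and [n] trailing a's force the
   padding of [deltaL _ b] to cover everything before that generator. *)
Let m := Cb * (#|dfa_state M| * k) + 1.
Let y := nseq m lb ++ gen c.
Variable b : seq A.
Hypotheses (Lb : L b) (Eyb : E y (phi b)).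
Let n := k * (Cb * size b + 1).
Let x := nseq m lb ++ nseq n la.

Lemma sk_cong_xc_y : E (x ++ gen c) y.
Proof. by rewrite /x /y -catA /n; exact: sk_cong_drop. Qed.

Lemma shorter_rep a : L a -> E x (phi a) ->
  exists a', [/\ L a', E x (phi a') & size a' < size a].
Proof.
move=> La Exa.
have E_ac_b : E (phi (a ++ [:: c])) (phi b).
  rewrite phi_cat /phi /= cats0.
  apply: (@rst_trans _ _ _ (x ++ gen c)); first exact: rst_sym (sk_cong_catr _ Exa).
  exact: rst_trans sk_cong_xc_y Eyb.
have count_a : count_mem lb (phi a) = m.
  by rewrite -(sk_cong_count_b Exa) count_cat !count_nseq /=; lia.
have trail_a : trail 0 (phi a) = n.
  rewrite -(sk_cong_trail Exa) trail_cat trail_nseq.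
  by have -> : trail 0 (nseq m lb) = 0 by elim: (m).
have b_in_a : lb \in phi a by rewrite -has_pred1 has_count count_a /m addn1.
have [p [lt_p b_in_drop count_le trail_le]] := last_b_position b_in_a.
have le_Nk_p : #|dfa_state M| * k <= p.
  by move: count_le; rewrite count_a /m addn1 ltn_mul2l => /andP [].
have le_p : p <= size a - size b.
  have : Cb * size b < Cb * (size a - p).
    by apply: leq_trans trail_le; rewrite trail_a /n addn1 leq_pmull.
  by rewrite ltn_mul2l => /andP [_]; lia.
have acc_ab : dfa_accept M (deltaL a b).
  by apply/M_LaL; exists a, b; split.
pose col i : 'I_k := Ordinal (ltn_pmod (size (phi (take i a))) k_gt0).
have [i [j [/andP [lt_ij le_jp] eq_col acc_cut]]] :
    exists i j, [/\ i < j <= p, col i = col j &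
      dfa_accept M (take i (deltaL a b) ++ drop j (deltaL a b)) =
      dfa_accept M (deltaL a b)].
  by apply: dfa_accept_cut; rewrite card_ord.
have le_j : j <= size a - size b := leq_trans le_jp le_p.
have /M_LaL [a' [b' [La' _ Ea'c_b /deltaL_inj [def_a' def_b']]]] :
    dfa_accept M (deltaL (take i a ++ drop j a) b).
  by rewrite -deltaL_cut ?(ltnW lt_ij) // acc_cut.
subst a' b'; exists (take i a ++ drop j a); split=> //.
  apply: rst_trans Exa _.
  apply: sk_cong_cut (ltnW lt_ij) _ (congr1 val eq_col) (b_in_drop j le_jp).
  move: (sk_cong_count_b Ea'c_b) (sk_cong_count_b E_ac_b).
  by rewrite !phi_cat !count_cat; lia.
by rewrite size_cat size_takel ?size_drop; lia.
Qed.

Lemma no_rep_x a : L a -> ~ E x (phi a).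
Proof.
move: {2}(size a) (leqnn (size a)) => s; elim: s a => [|s IH] a le_as La Exa;
  have [a' [La' Exa' lt_a']] := shorter_rep La Exa; first by rewrite leqn0 in le_as; lia.
by apply: (IH a') La' Exa'; lia.
Qed.

End Pumping.

Lemma not_regular_LaL : ~ regular (LaL E gen L (Some c)).
Proof.
move=> [M M_LaL]; have [_ _ rep] := L_rep.
pose m := Cb * (#|dfa_state M| * k) + 1.
have [b [Lb Eyb]] : exists b, L b /\ E (nseq m lb ++ gen c) (phi b).
  by apply: rep; rewrite /m addn1.
have [a [La Exa]] :
    exists a, L a /\ E (nseq m lb ++ nseq (k * (Cb * size b + 1)) la) (phi a).
  by apply: rep; rewrite /m addn1.
exact: (no_rep_x M_LaL Lb Eyb La Exa).
Qed.

End LeftPaddedLanguage.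

Lemma not_biautomatic_sk_cong k : 0 < k -> ~ biautomatic (sk_cong k).
Proof.
move=> k_gt0 [A [gen [L [[_ _ gen_onto] L_rep LaL_reg]]]].
have [c b_in_c] : exists c, lb \in gen c.
  have [w [_ E_b_w]] := gen_onto [:: lb] isT.
  have /flatten_mapP [c _ b_in_c] : lb \in phi gen w.
    by rewrite -has_pred1 has_count -(sk_cong_count_b E_b_w).
  by exists c.
have [_ LaL_c _ _] := LaL_reg (Some c).
exact: not_regular_LaL k_gt0 L_rep b_in_c LaL_c.
Qed.

Theorem theorem3p1p8 (k : nat) : 1 <= k ->
  prefix_automatic (sk_cong k) /\ ~ biautomatic (sk_cong k).
Proof.
move=> k_gt0; split; [exact: prefix_automatic_sk_cong | exact: not_biautomatic_sk_cong].
Qed.
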